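(* Let $\eta$ be a primitive $7$-th root of unity. Call a real polynomial $G(x,y,z)$ special if $G(\eta x,\eta^2y,\eta^4z)=G(x,y,z)$, $G=1$ on the plane $x+y+z=1$, $G$ has only non-negative coefficients, and $G(0,0,0)=0$. Let $G$ be special. If $\deg G=7$, then $N(G)=17$. There is no special $G$ of degree $8$ or $9$. If $\deg G=10$, then $N(G)=29$ or $N(G)=30$. If $\deg G=11$, then $N(G)\ge 31$.
   Context: $N(G)$ denotes the number of distinct monomials with nonzero coefficient in $G$. *)

From HB Require Import structures.
From mathcomp Require Import all_boot all_order all_algebra.
From mathcomp Require Import mpoly.
From mathcomp.real_closed Require Import complex.
Set Implicit Arguments. Unset Strict Implicit. Unset Printing Implicit Defensive.
Import Order.TTheory GRing.Theory Num.Theory.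
Local Open Scope ring_scope.

Definition ev3 (K : comNzRingType) (p : {mpoly K[3]}) (x y z : K) : K :=
  p.@[fun i : 'I_3 => nth 0 [:: x; y; z] i].

Definition special (R : rcfType) (eta : complex R) (G : {mpoly R[3]}) : Prop :=
  [/\ (forall x y z : complex R,
         ev3 (map_mpoly (real_complex R) G) (eta * x) (eta ^+ 2 * y) (eta ^+ 4 * z)
         = ev3 (map_mpoly (real_complex R) G) x y z),
      (forall x y z : R, x + y + z = 1 -> ev3 G x y z = 1),
      (forall m, 0 <= G@_m) &
      ev3 G 0 0 0 = 0].

(* total degree of a (nonzero) polynomial: msize p = deg p + 1 *)
Definition tdeg (R : nzRingType) (n : nat) (p : {mpoly R[n]}) : nat := (msize p).-1.

Definition Nmon (R : nzRingType) (n : nat) (p : {mpoly R[n]}) : nat := size (msupp p).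

From HB Require Import structures.
From mathcomp Require Import all_boot all_order all_algebra.
From mathcomp Require Import mpoly.
From mathcomp.real_closed Require Import complex.
From mathcomp Require Import ring zify.
Import Order.TTheory GRing.Theory Num.Theory.
Local Open Scope ring_scope.
Set Implicit Arguments. Unset Strict Implicit.

(* The diagonal action multiplies x^a y^b z^c by eta^(a + 2b + 4c), so a special G
   of degree at most 11 is supported on the 51 exponents (a, b, c) <> (0, 0, 0) of
   degree at most 11 with a + 2b + 4c = 0 mod 7.  Comparing the coefficients of
   x^i y^j in G(x, y, 1 - x - y) = 1 gives a linear system in these 51 coefficients
   that an explicit four-parameter family F(p, u, v, w) satisfies identically, and
   that becomes triangular once four of the coefficients are fixed; hence
   G = F(p, u, v, w).  Every coefficient of F is an integer linear form in
   (1, p, u, v, w), so the sign pattern of (p, u, v, w) bounds the number of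
   nonzero coefficients from both sides.  The degree of G and the nonnegativity
   of its coefficients leave only a few sign patterns, and their bounds are
   computed. *)

Section VanishingPolynomialFunctions.
Variable K : numDomainType.

Lemma vanishing_coef1 n (C : nat -> K) :
  (forall x : K, \sum_(0 <= i < n) C i * x ^+ i = 0) -> forall i, (i < n)%N -> C i = 0.
Proof.
move=> C0 i lt_in.
suff /(congr1 (fun p : {poly K} => p`_i)) : \poly_(j < n) C j = 0.
  by rewrite coef_poly lt_in coef0.
apply: (@roots_geq_poly_eq0 _ _ [seq j%:R | j <- iota 0 n]).
- apply/allP => _ /mapP[j _ ->].
  by rewrite /root horner_poly -(big_mkord xpredT (fun i => C i * j%:R ^+ i)) C0.
- by rewrite map_inj_uniq ?iota_uniq // => j k /eqP; rewrite eqr_nat => /eqP.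
- by rewrite size_map size_iota size_poly.
Qed.

Lemma vanishing_coef2 n (C : nat -> nat -> K) :
  (forall x y : K, \sum_(0 <= i < n) \sum_(0 <= j < n) C i j * (x ^+ i * y ^+ j) = 0) ->
  forall i j, (i < n)%N -> (j < n)%N -> C i j = 0.
Proof.
move=> C0 i j lt_in lt_jn; move: j lt_jn; apply: vanishing_coef1 => y.
move: i lt_in; apply: vanishing_coef1 => x.
rewrite -[RHS](C0 x y); apply: eq_bigr => i _.
by rewrite mulr_suml; apply: eq_bigr => j _; rewrite mulrAC mulrA.
Qed.

Lemma vanishing_coef3 n (C : nat -> nat -> nat -> K) :
  (forall x y z : K, \sum_(0 <= i < n) \sum_(0 <= j < n) \sum_(0 <= k < n)
     C i j k * (x ^+ i * y ^+ j * z ^+ k) = 0) ->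
  forall i j k, (i < n)%N -> (j < n)%N -> (k < n)%N -> C i j k = 0.
Proof.
move=> C0 i j k lt_in lt_jn lt_kn; move: k lt_kn; apply: vanishing_coef1 => z.
move: i j lt_in lt_jn; apply: vanishing_coef2 => x y.
rewrite -[RHS](C0 x y z); apply: eq_bigr => i _; apply: eq_bigr => j _.
by rewrite mulr_suml; apply: eq_bigr => k _; rewrite mulrAC mulrA.
Qed.

End VanishingPolynomialFunctions.

Notation exps := (nat * nat * nat)%type.

Definition mnm3 (t : exps) : 'X_{1..3} :=
  [multinom nth 0%N [:: t.1.1; t.1.2; t.2] i | i < 3].

Definition exps3 (m : 'X_{1..3}) : exps := (m ord0, m (lift ord0 ord0), m ord_max).

Definition deg3 (t : exps) : nat := (t.1.1 + t.1.2 + t.2)%N.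

Definition mono3 (K : comNzRingType) (t : exps) (x y z : K) : K :=
  x ^+ t.1.1 * y ^+ t.1.2 * z ^+ t.2.

Lemma mnm3K : cancel mnm3 exps3.
Proof. by case=> [[a b] c]; rewrite /exps3 !mnmE. Qed.

Lemma exps3K : cancel exps3 mnm3.
Proof.
move=> m; apply/mnmP => i; rewrite mnmE.
by case: i => [[|[|[|i]]] lt_i3] //=; congr (m _); apply: val_inj.
Qed.

Lemma mnm3_inj : injective mnm3.
Proof. exact: can_inj mnm3K. Qed.

Lemma mdeg_mnm3 t : mdeg (mnm3 t) = deg3 t.
Proof.
rewrite mdegE !big_ord_recl big_ord0 addn0 addnA /deg3 !mnmE.
by case: t => [[a b] c].
Qed.

Lemma ev3E (K : comNzRingType) (p : {mpoly K[3]}) x y z :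
  ev3 p x y z = \sum_(m <- msupp p) p@_m * mono3 (exps3 m) x y z.
Proof.
rewrite /ev3 mevalE; apply: eq_bigr => m _; congr (_ * _).
rewrite !big_ord_recl big_ord0 mulr1 mulrA /mono3 /=.
by congr (_ * _ ^+ m _); apply: val_inj.
Qed.

Lemma ev3_sum (K : comNzRingType) (p : {mpoly K[3]}) (L : seq exps) x y z :
  uniq L -> {subset msupp p <= map mnm3 L} ->
  ev3 p x y z = \sum_(t <- L) p@_(mnm3 t) * mono3 t x y z.
Proof.
move=> uL sL; rewrite ev3E.
have -> : \sum_(t <- L) p@_(mnm3 t) * mono3 t x y z =
    \sum_(m <- map mnm3 L) p@_m * mono3 (exps3 m) x y z.
  by rewrite big_map; apply: eq_bigr => t _; rewrite mnm3K.
rewrite [RHS](bigID (mem (msupp p))) /= [X in _ = _ + X]big1 ?addr0; last first.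
  by move=> m /memN_msupp_eq0 ->; rewrite mul0r.
rewrite -[X in _ = X]big_filter; apply: perm_big; apply: uniq_perm.
- exact: msupp_uniq.
- by rewrite filter_uniq // map_inj_uniq //; exact: mnm3_inj.
- by move=> m; rewrite mem_filter andb_idr //; exact: sL.
Qed.

Definition box (n : nat) : seq exps :=
  [seq (ab, c) | ab <- [seq (a, b) | a <- iota 0 n, b <- iota 0 n], c <- iota 0 n].

Lemma box_uniq n : uniq (box n).
Proof.
apply: allpairs_uniq; rewrite ?iota_uniq //; last by move=> [? ?] [? ?] _ _ [-> ->].
by apply: allpairs_uniq; rewrite ?iota_uniq // => [[? ?] [? ?] _ _ [-> ->]].
Qed.

Lemma mem_box n a b c : (a < n)%N -> (b < n)%N -> (c < n)%N -> (a, b, c) \in box n.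
Proof.
move=> ha hb hc; apply: (allpairs_f (fun ab c => (ab, c))); last by rewrite mem_iota.
by apply: (allpairs_f pair); rewrite mem_iota.
Qed.

Lemma msupp_box (K : nzRingType) (p : {mpoly K[3]}) n :
  (msize p <= n)%N -> {subset msupp p <= map mnm3 (box n)}.
Proof.
move=> le_pn m /msize_mdeg_lt/leq_trans/(_ le_pn).
rewrite -(exps3K m) mdeg_mnm3 /deg3 /= => lt_mn; apply/map_f/mem_box; lia.
Qed.

Lemma ev3_box (K : comNzRingType) (p : {mpoly K[3]}) n x y z :
  (msize p <= n)%N ->
  ev3 p x y z = \sum_(0 <= i < n) \sum_(0 <= j < n) \sum_(0 <= k < n)
                  p@_(mnm3 (i, j, k)) * mono3 (i, j, k) x y z.
Proof.
move=> le_pn; rewrite (ev3_sum _ _ _ (box_uniq n) (msupp_box le_pn)) !big_allpairs.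
by rewrite /index_iota subn0.
Qed.

Definition wdeg (w t : exps) : nat := (w.1.1 * t.1.1 + w.1.2 * t.1.2 + w.2 * t.2)%N.

Lemma mono3_scale (K : comNzRingType) (e x y z : K) w t :
  mono3 t (e ^+ w.1.1 * x) (e ^+ w.1.2 * y) (e ^+ w.2 * z) =
  e ^+ wdeg w t * mono3 t x y z.
Proof. rewrite /mono3 /wdeg !exprMn !exprD !exprM; ring. Qed.

Lemma msupp_wdeg_dvd (K : numDomainType) n (e : K) w (p : {mpoly K[3]}) :
  n.-primitive_root e ->
  (forall x y z, ev3 p (e ^+ w.1.1 * x) (e ^+ w.1.2 * y) (e ^+ w.2 * z) = ev3 p x y z) ->
  forall m, m \in msupp p -> (n %| wdeg w (exps3 m))%N.
Proof.
move=> prim_e inv_p m supp_m; pose N := msize p.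
have vanish x y z : \sum_(0 <= i < N) \sum_(0 <= j < N) \sum_(0 <= k < N)
    p@_(mnm3 (i, j, k)) * (e ^+ wdeg w (i, j, k) - 1) * (x ^+ i * y ^+ j * z ^+ k) = 0.
  rewrite -[RHS](subrr (ev3 p x y z)) -[in X in _ = X - _]inv_p.
  rewrite !(ev3_box _ _ _ (leqnn N)) -sumrB; apply: eq_bigr => i _.
  rewrite -sumrB; apply: eq_bigr => j _; rewrite -sumrB; apply: eq_bigr => k _.
  by rewrite mono3_scale /mono3; ring.
have [lt0 lt1 lt2] : [/\ m ord0 < N, m (lift ord0 ord0) < N & m ord_max < N]%N.
  move: (msize_mdeg_lt supp_m); rewrite -{1}(exps3K m) mdeg_mnm3 /deg3 /= => lt_m.
  by split; lia.
have /eqP := vanishing_coef3 vanish lt0 lt1 lt2.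
rewrite -[(m ord0, _, _)]/(exps3 m) exps3K mulf_eq0 subr_eq0 -(prim_order_dvd prim_e).
by rewrite mcoeff_eq0 supp_m.
Qed.

Lemma sum_window (V : nmodType) (F : nat -> V) a k N :
  (a + k < N)%N -> (forall i, (i < a)%N || (a + k < i)%N -> F i = 0) ->
  \sum_(0 <= i < N) F i = \sum_(p < k.+1) F (p + a)%N.
Proof.
move=> lt_akN F0.
rewrite (big_cat_nat (n := a)) //=; last by lia.
rewrite (big_cat_nat (n := a + k.+1) (m := a)) /=; [|lia|lia].
rewrite [X in X + _]big_nat_cond [X in _ + (_ + X)]big_nat_cond.
rewrite big1 => [|i /andP[/andP[_ lt_ia] _]]; last by rewrite F0 ?lt_ia.
rewrite [X in _ + (_ + X)]big1 => [|i /andP[/andP[lt_i _] _]]; last first.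
  by rewrite F0 // -addnS lt_i orbT.
by rewrite add0r addr0 -{1}(add0n a) big_addn addKn big_mkord.
Qed.

Definition plane_coef (t : exps) (i j : nat) : int :=
  let: (a, b, k) := t in
  if ((a <= i) && (b <= j))%N then
    (-1) ^+ (i - a + (j - b)) * ('C(k, i - a) * 'C(k - (i - a), j - b))%:R
  else 0.

Lemma mono3_plane (K : comNzRingType) (t : exps) N (x y : K) :
  (deg3 t < N)%N ->
  mono3 t x y (1 - x - y) =
    \sum_(0 <= i < N) \sum_(0 <= j < N) (plane_coef t i j)%:~R * (x ^+ i * y ^+ j).
Proof.
case: t => [[a b] k]; rewrite /deg3 /mono3 /= => lt_N.
rewrite (sum_window (a := a) (k := k)); last 2 first.
- by lia.
- move=> i /orP[lt_ia|lt_i]; apply: big1 => j _; rewrite /plane_coef.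
    by rewrite leqNgt lt_ia mul0r.
  case: ifP => _; last by rewrite mul0r.
  by rewrite bin_small ?mul0n ?mulr0 ?mul0r //; lia.
rewrite (_ : 1 - x - y = (1 - y) - x) ?[in LHS]exprBn; last by ring.
rewrite big_distrr /=; apply: eq_bigr => p _.
rewrite (sum_window (a := b) (k := k - p)); last 2 first.
- by lia.
- move=> j /orP[lt_jb|lt_j]; rewrite /plane_coef.
    by rewrite leq_addl leqNgt lt_jb mul0r.
  rewrite leq_addl addnK /= (@bin_small (k - p)); last by lia.
  by rewrite muln0 mulr0 if_same mulr0z mul0r.
rewrite -mulr_natr (_ : _ * _ =
    (-1) ^+ p * x ^+ (p + a) * y ^+ b * 'C(k, p)%:R * (1 - y) ^+ (k - p)); last first.
  by rewrite exprD; ring.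
rewrite exprBn big_distrr; apply: eq_bigr => q _.
rewrite /plane_coef !leq_addl !addnK /= intrM intr_sign natrM expr1n -mulr_natr !exprD.
ring.
Qed.

Lemma plane_equations (K : numDomainType) (L : seq exps) (c : exps -> K) N :
  all (fun t => deg3 t < N)%N L ->
  (forall x y, \sum_(t <- L) c t * mono3 t x y (1 - x - y) = 1) ->
  forall i j, (i < N)%N -> (j < N)%N ->
    \sum_(t <- L) (plane_coef t i j)%:~R * c t = ((i == 0%N) && (j == 0%N))%:R.
Proof.
case: N => [|N] degL planeL i j lt_i lt_j //; apply/eqP; rewrite -subr_eq0; apply/eqP.
move: i j lt_i lt_j; apply: vanishing_coef2 => x y.
have unit_sum : \sum_(0 <= i < N.+1) \sum_(0 <= j < N.+1)
    ((i == 0%N) && (j == 0%N))%:R * (x ^+ i * y ^+ j) = 1 :> K.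
  rewrite big_nat_recl // big_nat_recl // big1 => [|j _]; last by rewrite mul0r.
  rewrite big1 => [|i _]; last by rewrite big1 // => j _; rewrite mul0r.
  by rewrite !addr0 mul1r !expr0 mulr1.
under eq_bigr => i _ do under eq_bigr => j _ do rewrite mulrBl mulr_suml.
under eq_bigr => i _ do rewrite sumrB.
rewrite sumrB unit_sum; under eq_bigr => i _ do rewrite exchange_big.
rewrite exchange_big; apply/eqP; rewrite subr_eq0; apply/eqP; rewrite -[RHS](planeL x y).
apply: eq_big_seq => t tL; rewrite (mono3_plane _ _ (allP degL t tL)) mulr_sumr.
by apply: eq_bigr => i _; rewrite mulr_sumr; apply: eq_bigr => j _; rewrite [RHS]mulrCA mulrA.
Qed.

Section TriangularSystem.
Variables (K : numDomainType) (T : eqType) (E : Type).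
Variables (A : E -> T -> int) (P : pred E) (L : seq T).

Fixpoint triangular (Z : seq T) (s : seq (T * E)) : bool :=
  if s is (t, e) :: s' then
    [&& P e, t \in L, A e t != 0,
        all (fun t' => (A e t' == 0) || (t' \in t :: Z)) L & triangular (t :: Z) s']
  else all (mem Z) L.

Variable d : T -> K.
Hypotheses (L_uniq : uniq L)
  (homogeneous : forall e, P e -> \sum_(t <- L) (A e t)%:~R * d t = 0).

Lemma triangular_eq0 Z s :
  {in Z, forall t, d t = 0} -> triangular Z s -> {in L, forall t, d t = 0}.
Proof.
elim: s Z => [|[t e] s IH] Z dZ /=; first by move=> /allP LZ t /LZ /dZ.
case/and5P => Pe tL Aet supp /(IH (t :: Z)); apply => t'; rewrite inE.
case/orP => [/eqP -> {t'}|]; last exact: dZ.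
have /eqP := homogeneous Pe; rewrite (bigD1_seq t) //= big_seq_cond big1 ?addr0.
  by rewrite mulf_eq0 intr_eq0 (negbTE Aet) => /eqP.
move=> t' /andP[t'L t't]; have /orP[/eqP ->|] := allP supp t' t'L.
  by rewrite mulr0z mul0r.
by rewrite inE (negbTE t't) => /dZ ->; rewrite mulr0.
Qed.

End TriangularSystem.

Definition lin (K : nzRingType) n (k : seq int) (v : seq K) : K :=
  \sum_(i <- iota 0 n) (k`_i)%:~R * v`_i.

Lemma sum_lin (K : nzRingType) (T : Type) (L : seq T) (a : T -> int) (k : T -> seq int)
    n (v : seq K) :
  \sum_(t <- L) (a t)%:~R * lin n (k t) v =
  lin n [seq \sum_(t <- L) a t * (k t)`_i | i <- iota 0 n] v.
Proof.
rewrite /lin; under eq_bigr => t _ do rewrite mulr_sumr.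
rewrite exchange_big /=; apply: eq_big_seq => i; rewrite mem_iota => /andP[_ lt_in].
rewrite (nth_map 0%N) ?size_iota // nth_iota // add0n rmorph_sum mulr_suml.
by apply: eq_bigr => t _; rewrite rmorphM mulrA.
Qed.

Definition surely_sign n (eps : int) (s k : seq int) : bool :=
  all (fun i => 0 <= eps * (k`_i * s`_i)) (iota 0 n) &&
  has (fun i => 0 < eps * (k`_i * s`_i)) (iota 0 n).

Definition surely_zero n (s k : seq int) : bool :=
  all (fun i => k`_i * s`_i == 0) (iota 0 n).

Section SignPatterns.
Variable K : realDomainType.

Lemma nth_sgz (v : seq K) i : ([seq sgz x | x <- v])`_i = sgz v`_i.
Proof.
case: (ltnP i (size v)) => [lt_iv|le_vi]; first by rewrite (nth_map 0).
by rewrite !nth_default ?size_map ?sgz0.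
Qed.

Lemma lin_surely_sign n eps k (v : seq K) :
  surely_sign n eps [seq sgz x | x <- v] k -> 0 < eps%:~R * lin n k v.
Proof.
case/andP => /allP ge0 /hasP[j j_n gt0]; rewrite /lin mulr_sumr.
have term_sgz i : sgz (eps * (k`_i * [seq sgz x | x <- v]`_i)) =
                  sgz (eps%:~R * ((k`_i)%:~R * v`_i)).
  by rewrite nth_sgz !sgzM !sgz_int sgz_id.
have terms_ge0 i : i \in iota 0 n -> 0 <= eps%:~R * ((k`_i)%:~R * v`_i).
  by move=> i_n; rewrite -sgz_ge0 -term_sgz sgz_ge0 ge0.
rewrite lt0r big_seq (psumr_neq0 _ terms_ge0) (sumr_ge0 _ terms_ge0) andbT.
by apply/hasP; exists j; rewrite // j_n -sgz_gt0 -term_sgz sgz_gt0.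
Qed.

Lemma lin_surely_zero n k (v : seq K) :
  surely_zero n [seq sgz x | x <- v] k -> lin n k v = 0.
Proof.
move=> /allP zero; rewrite /lin big_seq big1 // => i /zero.
by rewrite nth_sgz mulf_eq0 sgz_eq0 => /orP[] /eqP ->; rewrite ?mulr0z ?mul0r ?mulr0.
Qed.

Lemma count_lin_neq0 (T : Type) (L : seq T) n (k : T -> seq int) (v : seq K) :
  let s := [seq sgz x | x <- v] in
  (count (fun t => surely_sign n 1 s (k t)) L
    <= count (fun t => lin n (k t) v != 0%R) L
    <= size L - count (fun t => surely_zero n s (k t)) L)%N.
Proof.
apply/andP; split.
  by apply: sub_count => t /lin_surely_sign; rewrite mulr1z mul1r => /lt0r_neq0.
rewrite -(count_predC (fun t => surely_zero n [seq sgz x | x <- v] (k t))) addKn.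
by apply: sub_count => t; apply: contraNN => /lin_surely_zero ->.
Qed.

End SignPatterns.

Lemma ev3_origin (K : comNzRingType) (p : {mpoly K[3]}) :
  ev3 p 0 0 0 = p@_(mnm3 (0, 0, 0)%N).
Proof.
rewrite ev3E [p in RHS]mpolyE raddf_sum; apply: eq_bigr => m _.
rewrite /= mcoeffZ mcoeffX -(can_eq exps3K) mnm3K; congr (_ * _).
case: (exps3 m) => [[a b] c]; rewrite /mono3 /= !expr0n -!natrM.
by case: a => [|a]; case: b => [|b]; case: c.
Qed.

Lemma Nmon_count (K : nzRingType) (p : {mpoly K[3]}) (L : seq exps) :
  uniq L -> {subset msupp p <= map mnm3 L} ->
  Nmon p = count (fun t => p@_(mnm3 t) != 0) L.
Proof.
move=> uL sL; rewrite /Nmon -(count_map mnm3 (fun m => p@_m != 0)) -size_filter.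
apply/perm_size/uniq_perm; rewrite ?msupp_uniq ?filter_uniq ?map_inj_uniq //.
  exact: mnm3_inj.
move=> m; rewrite mem_filter mcoeff_msupp; apply/idP/andP => [m_p|[]//].
by split=> //; apply: sL; rewrite mcoeff_msupp.
Qed.

Definition invariant_exponents : seq exps :=
  [:: (1, 1, 1); (0, 1, 3); (1, 3, 0); (3, 0, 1); (0, 3, 2); (2, 0, 3);
     (3, 2, 0); (0, 5, 1); (1, 0, 5); (2, 2, 2); (5, 1, 0); (0, 0, 7);
     (0, 7, 0); (1, 2, 4); (2, 4, 1); (4, 1, 2); (7, 0, 0); (0, 2, 6);
     (1, 4, 3); (2, 6, 0); (3, 1, 4); (4, 3, 1); (6, 0, 2); (0, 4, 5);
     (1, 6, 2); (2, 1, 6); (3, 3, 3); (4, 5, 0); (5, 0, 4); (6, 2, 1);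
     (0, 6, 4); (1, 1, 8); (1, 8, 1); (2, 3, 5); (3, 5, 2); (4, 0, 6);
     (5, 2, 3); (6, 4, 0); (8, 1, 1); (0, 1, 10); (0, 8, 3); (1, 3, 7);
     (1, 10, 0); (2, 5, 4); (3, 0, 8); (3, 7, 1); (4, 2, 5); (5, 4, 2);
     (7, 1, 3); (8, 3, 0); (10, 0, 1)]%N.

Lemma invariant_exponents_uniq : uniq invariant_exponents.
Proof. by vm_compute. Qed.

Lemma invariant_exponents_deg : all (fun t => deg3 t < 12)%N invariant_exponents.
Proof. by vm_compute. Qed.

Lemma invariant_exponents_complete :
  all (fun t => [&& deg3 t < 12, 7 %| wdeg (1, 2, 4) t & t != (0, 0, 0)]%N
                ==> (t \in invariant_exponents)) (box 12).
Proof. by vm_compute. Qed.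

Lemma special_msupp (R : rcfType) (eta : complex R) (G : {mpoly R[3]}) :
  7.-primitive_root eta -> special eta G -> (msize G <= 12)%N ->
  {subset msupp G <= map mnm3 invariant_exponents}.
Proof.
move=> prim_eta [inv_G _ _ G0] le_G m supp_m.
have supp_Gc : m \in msupp (map_mpoly (real_complex R) G).
  by rewrite (perm_mem (msupp_map_mpoly _ (fmorph_inj _))).
have dvd_m : (7 %| wdeg (1, 2, 4) (exps3 m))%N.
  by apply: (msupp_wdeg_dvd prim_eta) supp_Gc => x y z; rewrite expr1; exact: inv_G.
have deg_m : (deg3 (exps3 m) < 12)%N.
  by rewrite -mdeg_mnm3 exps3K (leq_trans (msize_mdeg_lt supp_m)).
have m_nz : exps3 m != (0, 0, 0)%N.
  apply: contraTneq supp_m => m0; rewrite mcoeff_msupp -(exps3K m) m0.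
  by rewrite -ev3_origin G0 eqxx.
rewrite -(exps3K m); apply: map_f.
have in_box : exps3 m \in box 12.
  by move: deg_m; case: (exps3 m) => [[a b] c]; rewrite /deg3 /= => ?; apply: mem_box; lia.
by move/implyP: (allP invariant_exponents_complete _ in_box); apply; apply/and3P.
Qed.

(* The row [:: k0; k1; k2; k3; k4] stands for k0 + k1 p + k2 u + k3 v + k4 w,
   where (1, p, u, v, w) = family_params G. *)
Definition family_coef (t : exps) : seq int :=
  match t with
  | (1, 1, 1)%N => [:: 14; -1; 0; 0; 0]
  | (0, 1, 3)%N => [:: 7; 0; -1; 0; 0]
  | (1, 3, 0)%N => [:: 7; 0; 0; -1; 0]
  | (3, 0, 1)%N => [:: 7; 0; 0; 0; -1]
  | (0, 3, 2)%N => [:: 14; 0; 0; 0; 0]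
  | (2, 0, 3)%N => [:: 14; 0; 0; 0; 0]
  | (3, 2, 0)%N => [:: 14; 0; 0; 0; 0]
  | (0, 5, 1)%N => [:: 7; 0; 0; 0; 0]
  | (1, 0, 5)%N => [:: 7; 0; 0; 0; 0]
  | (2, 2, 2)%N => [:: 7; 14; 0; 0; 0]
  | (5, 1, 0)%N => [:: 7; 0; 0; 0; 0]
  | (0, 0, 7)%N => [:: 1; 0; 0; 0; 0]
  | (0, 7, 0)%N => [:: 1; 0; 0; 0; 0]
  | (1, 2, 4)%N => [:: 7; 7; 14; 0; 0]
  | (2, 4, 1)%N => [:: 7; 7; 0; 14; 0]
  | (4, 1, 2)%N => [:: 7; 7; 0; 0; 14]
  | (7, 0, 0)%N => [:: 1; 0; 0; 0; 0]
  | (0, 2, 6)%N => [:: 0; 0; 7; 0; 0]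
  | (1, 4, 3)%N => [:: 0; 14; 7; 7; 0]
  | (2, 6, 0)%N => [:: 0; 0; 0; 7; 0]
  | (3, 1, 4)%N => [:: 0; 14; 7; 0; 7]
  | (4, 3, 1)%N => [:: 0; 14; 0; 7; 7]
  | (6, 0, 2)%N => [:: 0; 0; 0; 0; 7]
  | (0, 4, 5)%N => [:: 0; 0; 14; 0; 0]
  | (1, 6, 2)%N => [:: 0; 7; 0; 14; 0]
  | (2, 1, 6)%N => [:: 0; 7; 14; 0; 0]
  | (3, 3, 3)%N => [:: 0; 7; 14; 14; 14]
  | (4, 5, 0)%N => [:: 0; 0; 0; 14; 0]
  | (5, 0, 4)%N => [:: 0; 0; 0; 0; 14]
  | (6, 2, 1)%N => [:: 0; 7; 0; 0; 14]
  | (0, 6, 4)%N => [:: 0; 0; 7; 0; 0]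
  | (1, 1, 8)%N => [:: 0; 1; 7; 0; 0]
  | (1, 8, 1)%N => [:: 0; 1; 0; 7; 0]
  | (2, 3, 5)%N => [:: 0; 7; 7; 7; 0]
  | (3, 5, 2)%N => [:: 0; 7; 0; 7; 7]
  | (4, 0, 6)%N => [:: 0; 0; 0; 0; 7]
  | (5, 2, 3)%N => [:: 0; 7; 7; 0; 7]
  | (6, 4, 0)%N => [:: 0; 0; 0; 7; 0]
  | (8, 1, 1)%N => [:: 0; 1; 0; 0; 7]
  | (0, 1, 10)%N => [:: 0; 0; 1; 0; 0]
  | (0, 8, 3)%N => [:: 0; 0; 1; 0; 0]
  | (1, 3, 7)%N => [:: 0; 0; 7; 1; 0]
  | (1, 10, 0)%N => [:: 0; 0; 0; 1; 0]
  | (2, 5, 4)%N => [:: 0; 0; 7; 7; 0]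
  | (3, 0, 8)%N => [:: 0; 0; 0; 0; 1]
  | (3, 7, 1)%N => [:: 0; 0; 0; 7; 1]
  | (4, 2, 5)%N => [:: 0; 0; 7; 0; 7]
  | (5, 4, 2)%N => [:: 0; 0; 0; 7; 7]
  | (7, 1, 3)%N => [:: 0; 0; 1; 0; 7]
  | (8, 3, 0)%N => [:: 0; 0; 0; 1; 0]
  | (10, 0, 1)%N => [:: 0; 0; 0; 0; 1]
  | _ => [::]
  end.

(* Taking p := c_(8,1,1) - 7 c_(10,0,1) rather than c_(8,1,1) makes every
   coefficient of degree at least 5 a nonnegative combination of 1, p, u, v, w. *)
Definition family_params (K : nzRingType) (G : {mpoly K[3]}) : seq K :=
  [:: 1; G@_(mnm3 (8, 1, 1)%N) - 7 * G@_(mnm3 (10, 0, 1)%N); G@_(mnm3 (0, 1, 10)%N);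
      G@_(mnm3 (1, 10, 0)%N); G@_(mnm3 (10, 0, 1)%N)].

Definition plane_equation_indices : seq (nat * nat) :=
  [seq (i, j) | i <- iota 0 12, j <- iota 0 12].

Lemma family_on_plane :
  all (fun e => [seq \sum_(t <- invariant_exponents) plane_coef t e.1 e.2 * (family_coef t)`_i
                   | i <- iota 0 5] == [:: (e == (0, 0)%N)%:R; 0; 0; 0; 0])
      plane_equation_indices.
Proof. by rewrite unlock; vm_compute. Qed.

Definition elimination_order : seq (exps * (nat * nat)) :=
  [:: ((0, 0, 7), (0, 0)); ((0, 1, 3), (0, 1)); ((0, 2, 6), (0, 2));
     ((0, 3, 2), (0, 3)); ((0, 4, 5), (0, 4)); ((0, 5, 1), (0, 5));
     ((0, 6, 4), (0, 6)); ((0, 7, 0), (0, 7)); ((0, 8, 3), (0, 8));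
     ((1, 0, 5), (1, 0)); ((1, 3, 7), (1, 10)); ((2, 0, 3), (2, 0));
     ((2, 5, 4), (2, 9)); ((3, 0, 8), (11, 0)); ((3, 0, 1), (3, 0));
     ((3, 7, 1), (3, 8)); ((4, 0, 6), (4, 0)); ((4, 2, 5), (4, 7));
     ((5, 0, 4), (5, 0)); ((5, 4, 2), (5, 6)); ((6, 0, 2), (6, 0));
     ((7, 0, 0), (7, 0)); ((7, 1, 3), (7, 4)); ((8, 3, 0), (8, 3));
     ((1, 1, 8), (9, 1)); ((1, 1, 1), (1, 1)); ((1, 2, 4), (1, 2));
     ((1, 3, 0), (1, 3)); ((1, 4, 3), (1, 4)); ((1, 6, 2), (1, 6));
     ((1, 8, 1), (1, 8)); ((2, 1, 6), (2, 1)); ((2, 2, 2), (2, 2));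
     ((2, 3, 5), (2, 3)); ((2, 4, 1), (2, 4)); ((2, 6, 0), (2, 6));
     ((3, 1, 4), (3, 1)); ((3, 2, 0), (3, 2)); ((3, 3, 3), (3, 3));
     ((3, 5, 2), (3, 5)); ((4, 1, 2), (4, 1)); ((4, 3, 1), (4, 3));
     ((4, 5, 0), (4, 5)); ((5, 1, 0), (5, 1)); ((5, 2, 3), (5, 2));
     ((6, 2, 1), (6, 2)); ((6, 4, 0), (6, 4))]%N.

Lemma plane_system_triangular :
  triangular (fun e t => plane_coef t e.1 e.2) (fun e => (e.1 < 12) && (e.2 < 12))%N
    invariant_exponents [:: (8, 1, 1); (0, 1, 10); (1, 10, 0); (10, 0, 1)]%N
    elimination_order.
Proof. by vm_compute. Qed.

Lemma special_coef (R : rcfType) (eta : complex R) (G : {mpoly R[3]}) :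
  7.-primitive_root eta -> special eta G -> (msize G <= 12)%N ->
  {in invariant_exponents, forall t, G@_(mnm3 t) = lin 5 (family_coef t) (family_params G)}.
Proof.
move=> prim_eta spG le_G; have [_ plane_G _ _] := spG.
have G_plane x y : \sum_(t <- invariant_exponents) G@_(mnm3 t) * mono3 t x y (1 - x - y) = 1.
  rewrite -(ev3_sum _ _ _ invariant_exponents_uniq (special_msupp prim_eta spG le_G)).
  by apply: plane_G; ring.
have G_eqs := plane_equations invariant_exponents_deg G_plane.
have family_eqs i j : (i < 12)%N -> (j < 12)%N -> \sum_(t <- invariant_exponents)
    (plane_coef t i j)%:~R * lin 5 (family_coef t) (family_params G) =
    ((i == 0%N) && (j == 0%N))%:R.
  move=> lt_i lt_j; rewrite sum_lin.
  have /allP/(_ (i, j)) := family_on_plane; rewrite allpairs_f ?mem_iota // => /(_ isT) /eqP ->.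
  by rewrite /lin /= !big_cons big_nil /= xpair_eqE mulrz_nat mulr1 !mulr0z !mul0r !addr0.
move=> t tL; apply/eqP; rewrite -subr_eq0; apply/eqP; move: t tL.
apply: (triangular_eq0 (d := fun t => G@_(mnm3 t) - lin 5 (family_coef t) (family_params G))
  invariant_exponents_uniq _ _ plane_system_triangular).
- move=> [i j] /andP[lt_i lt_j] /=.
  by rewrite (eq_bigr _ (fun t _ => mulrBr _ _ _)) sumrB G_eqs // family_eqs // subrr.
- move=> t; rewrite !inE => /or4P[] /eqP -> /=; rewrite /lin /= !big_cons big_nil /=.
  all: by rewrite ?(mulr0z, mulrz_nat, mulr1z, mul0r, mul1r, add0r, addr0, subrK) subrr.
Qed.

Fixpoint sign_vectors n : seq (seq int) :=
  if n is n'.+1 then [seq a :: s | a <- [:: -1; 0; 1], s <- sign_vectors n'] else [:: [::]].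

Lemma sgz_sign_vectors (K : numDomainType) (v : seq K) :
  [seq sgz x | x <- v] \in sign_vectors (size v).
Proof.
elim: v => [|x v IH] //; apply: (allpairs_f (fun a w => a :: w) _ IH).
by rewrite sgz_def !inE; case: (x < 0); case: (x != 0).
Qed.

Definition sign_patterns : seq (seq int) := [seq 1 :: s | s <- sign_vectors 4].

Definition admissible (D : nat) (s : seq int) : bool :=
  [&& all (fun t => ~~ surely_sign 5 (-1) s (family_coef t)) invariant_exponents,
      all (fun t => (D < deg3 t)%N ==>
             ~~ surely_sign 5 1 s (family_coef t) && ~~ surely_sign 5 (-1) s (family_coef t))
          invariant_exponents &
      has (fun t => (deg3 t == D) && ~~ surely_zero 5 s (family_coef t)) invariant_exponents].

Definition Nmon_lb (s : seq int) : nat :=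
  count (fun t => surely_sign 5 1 s (family_coef t)) invariant_exponents.

Definition Nmon_ub (s : seq int) : nat :=
  size invariant_exponents - count (fun t => surely_zero 5 s (family_coef t)) invariant_exponents.

Lemma special_sign_pattern (R : rcfType) (eta : complex R) (G : {mpoly R[3]}) D :
  7.-primitive_root eta -> special eta G -> tdeg G = D -> (0 < D <= 11)%N ->
  let s := [seq sgz x | x <- family_params G] in
  [/\ s \in sign_patterns, admissible D s &
      (Nmon_lb s <= Nmon G <= Nmon_ub s)%N].
Proof.
move=> prim_eta spG degG /andP[D_gt0 le_D] s.
have msG : msize G = D.+1 by move: D_gt0; rewrite -degG /tdeg; case: (msize G).
have le_G : (msize G <= 12)%N by rewrite msG.
have coefG := special_coef prim_eta spG le_G.
have suppG := special_msupp prim_eta spG le_G.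
have [_ _ G_ge0 _] := spG.
have sign_G t : t \in invariant_exponents -> forall eps,
    surely_sign 5 eps s (family_coef t) -> 0 < eps%:~R * G@_(mnm3 t).
  by move=> tL eps /lin_surely_sign; rewrite coefG.
split.
- have -> : s = 1 :: [seq sgz x | x <- behead (family_params G)] by rewrite /s /= sgz1.
  exact/map_f/(sgz_sign_vectors (behead (family_params G))).
- apply/and3P; split.
  + apply/allP => t tL; apply/negP => /(sign_G t tL).
    by rewrite mulrN1z mulN1r oppr_gt0 ltNge G_ge0.
  + apply/allP => t tL; apply/implyP => lt_Dt.
    have G0 : G@_(mnm3 t) = 0.
      by apply/memN_msupp_eq0/msize_mdeg_ge; rewrite mdeg_mnm3 msG.
    by apply/andP; split; apply/negP => /(sign_G t tL); rewrite G0 mulr0 ltxx.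
  + have G_neq0 : G != 0 by rewrite -msize_poly_eq0 msG.
    have /mapP[t tL lead_t] := suppG _ (mlead_supp G_neq0).
    apply/hasP; exists t => //; apply/andP; split.
      by rewrite -mdeg_mnm3 -lead_t -eqSS (mlead_deg G_neq0) msG.
    apply/negP => /lin_surely_zero; rewrite -coefG // -lead_t.
    by move/eqP; rewrite mleadc_eq0 (negbTE G_neq0).
- rewrite (Nmon_count invariant_exponents_uniq suppG).
  rewrite (eq_in_count (a2 := fun t => lin 5 (family_coef t) (family_params G) != 0)).
    exact: count_lin_neq0.
  by move=> t tL /=; rewrite coefG.
Qed.

Lemma sign_pattern_table :
  [/\ all (fun s => admissible 7 s ==> (Nmon_lb s == 17) && (Nmon_ub s == 17))%N sign_patterns,
      ~~ has (admissible 8) sign_patterns, ~~ has (admissible 9) sign_patterns,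
      all (fun s => admissible 10 s ==> (29 <= Nmon_lb s) && (Nmon_ub s <= 30))%N sign_patterns &
      all (fun s => admissible 11 s ==> (31 <= Nmon_lb s))%N sign_patterns].
Proof. by split; vm_compute. Qed.

Unset Implicit Arguments.

Theorem proposition5p1 (R : rcfType) (eta : complex R)
    (Heta : 7.-primitive_root eta) (G : {mpoly R[3]}) :
  special eta G ->
  [/\ tdeg G = 7%N -> Nmon G = 17%N,
      tdeg G <> 8%N,
      tdeg G <> 9%N,
      tdeg G = 10%N -> Nmon G = 29%N \/ Nmon G = 30%N &
      tdeg G = 11%N -> (31 <= Nmon G)%N].
Proof.
move=> spG; have [t7 t8 t9 t10 t11] := sign_pattern_table.
have pattern := special_sign_pattern Heta spG.
split=> /pattern /(_ isT) [s_ps adm /andP[lb ub]].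
- have /andP[/eqP lo /eqP hi] := implyP (allP t7 _ s_ps) adm; lia.
- by move/hasP: t8; apply; exists [seq sgz x | x <- family_params G].
- by move/hasP: t9; apply; exists [seq sgz x | x <- family_params G].
- have /andP[lo hi] := implyP (allP t10 _ s_ps) adm; lia.
- have lo := implyP (allP t11 _ s_ps) adm; lia.
Qed.
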